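(* Let $0\le\epsilon<1/8$, let $v\in\mathbb R^n$ with $\|v\|=1$, and let $Q^*\subseteq[n]$ with $1\le|Q^*|\le n/2$. If $\left\|\bar{\mathbf 1}_{Q^*}/\|\bar{\mathbf 1}_{Q^*}\| - v\right\|^2\le\epsilon$, then, with $Q=\{i\in[n]: v_i\ge \frac{1}{2\sqrt{2|Q^*|}}\}$, $$|Q\,\triangle\,Q^*| = \|\mathbf 1_Q-\mathbf 1_{Q^*}\|^2 \le \frac{8\epsilon|Q|}{1-8\epsilon}.$$
   Context: $\mathbf 1_Q\in\{0,1\}^n$ is the indicator vector of $Q$, $\bar x=x-\frac{\langle x,\mathbf1\rangle}{n}\mathbf1$ for $x\in\mathbb R^n$, $\|\cdot\|$ is the Euclidean norm, and $\triangle$ is symmetric difference. *)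

From mathcomp Require Import all_boot all_order all_algebra.
Set Implicit Arguments. Unset Strict Implicit. Unset Printing Implicit Defensive.
Import Order.TTheory GRing.Theory Num.Theory.
Local Open Scope ring_scope.

Definition indv {R : numDomainType} {n : nat} (Q : {set 'I_n}) : 'I_n -> R :=
  fun i => (i \in Q)%:R.

Definition centerv {R : numFieldType} {n : nat} (x : 'I_n -> R) : 'I_n -> R :=
  fun i => x i - (\sum_(j < n) x j) / n%:R.

Definition sqnorm {R : numDomainType} {n : nat} (x : 'I_n -> R) : R :=
  \sum_(i < n) x i ^+ 2.

Definition enorm {R : rcfType} {n : nat} (x : 'I_n -> R) : R :=
  Num.sqrt (sqnorm x).

Definition symdiff {T : finType} (A B : {set T}) : {set T} :=
  (A :\: B) :|: (B :\: A).

From mathcomp Require Import all_boot all_order all_algebra.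
From mathcomp Require Import ring lra.
Import Order.TTheory GRing.Theory Num.Theory.
Local Open Scope ring_scope.

(* The normalised centred indicator u of Q* equals a/s on Q* and is <= 0 off Q*,
   where s^2 = |Q*| a and a = 1 - |Q*|/n >= 1/2; hence u >= 1/sqrt(2|Q*|) = 2t on
   Q*, with t the threshold defining Q.  Every coordinate of Q triangle Q* then
   contributes at least t^2 = 1/(8|Q*|) to ||u - v||^2 <= eps, so
   |Q triangle Q*| <= 8 eps |Q*| <= 8 eps (|Q| + |Q triangle Q*|). *)

Lemma sum_indv (R : numDomainType) n (A : {set 'I_n}) :
  \sum_i (indv A i : R) = (#|A|)%:R.
Proof.
rewrite (eq_bigr (fun i => if i \in A then 1 else 0)).
  by rewrite -big_mkcond sumr_const.
by move=> i _; rewrite /indv; case: (i \in A).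
Qed.

Lemma sqnorm_indvB (R : numDomainType) n (A B : {set 'I_n}) :
  sqnorm (R:=R) (fun i => indv A i - indv B i) = (#|symdiff A B|)%:R.
Proof.
rewrite /sqnorm -sum_indv; apply: eq_bigr => i _.
rewrite /indv /symdiff in_setU !in_setD.
by case: (i \in A); case: (i \in B) => /=; ring.
Qed.

Lemma card_le_symdiff n (A B : {set 'I_n}) :
  (#|B| <= #|A| + #|symdiff A B|)%N.
Proof.
apply: leq_trans (leq_card_setU A (symdiff A B)).
apply: subset_leq_card; apply/subsetP => i Bi.
by rewrite /symdiff !inE Bi; case: (i \in A).
Qed.

Lemma card_mul_sq_le_sqnorm (R : realDomainType) n (x : 'I_n -> R)
    (S : {set 'I_n}) (t : R) :
  (forall i, i \in S -> t ^+ 2 <= x i ^+ 2) -> (#|S|)%:R * t ^+ 2 <= sqnorm x.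
Proof.
move=> xS; rewrite /sqnorm (bigID (mem S)) /= -[_ * _]addr0.
apply: lerD; last by apply: sumr_ge0 => i _; exact: sqr_ge0.
by rewrite mulr_natl -sumr_const; apply: ler_sum.
Qed.

Lemma centerv_indv (R : numFieldType) n (A : {set 'I_n}) i :
  centerv (indv A) i = indv A i - (#|A|)%:R / n%:R :> R.
Proof. by rewrite /centerv sum_indv. Qed.

Lemma sqnorm_centerv_indv (R : numFieldType) n (A : {set 'I_n}) :
  (0 < n)%N ->
  sqnorm (centerv (indv A)) = (#|A|)%:R * (1 - (#|A|)%:R / n%:R) :> R.
Proof.
move=> n_gt0; set k : R := (#|A|)%:R; set N : R := n%:R.
have N_neq0 : N != 0 by rewrite pnatr_eq0 -lt0n.
rewrite /sqnorm (eq_bigr (fun i => indv A i * (1 - 2 * (k / N)) + (k / N) ^+ 2)).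
  by rewrite big_split /= -mulr_suml sum_indv sumr_const card_ord -mulr_natr; field.
by move=> i _; rewrite centerv_indv /indv; case: (i \in A) => /=; ring.
Qed.

Section NormalizedCenteredIndicator.

Variables (R : rcfType) (n : nat) (A : {set 'I_n}).
Hypotheses (A_gt0 : (1 <= #|A|)%N) (A_le_half : (2 * #|A| <= n)%N).

Let k : R := (#|A|)%:R.
Let a : R := 1 - k / n%:R.
Let u i : R := centerv (indv A) i / enorm (centerv (indv A)).

Let k_ge1 : 1 <= k. Proof. by rewrite ler1n. Qed.

Let a_ge_half : 1 <= 2 * a.
Proof.
have kn : 2 * k <= n%:R by rewrite -natrM ler_nat.
have k1 := k_ge1.
have : k / n%:R <= 1 / 2 by rewrite ler_pdivrMr; lra.
rewrite /a; lra.
Qed.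

Let enorm_centerv : enorm (centerv (indv A)) = Num.sqrt (k * a).
Proof.
rewrite /enorm sqnorm_centerv_indv //.
by apply: leq_trans A_le_half; rewrite muln_gt0.
Qed.

Lemma normalized_centerv_indv_ge i :
  i \in A -> 1 / Num.sqrt (2 * k) <= u i.
Proof.
move=> Ai; rewrite /u centerv_indv /indv Ai -/k -/a enorm_centerv.
have k1 := k_ge1; have a_half := a_ge_half.
have r_gt0 : 0 < Num.sqrt (2 * k) by rewrite sqrtr_gt0; lra.
have ka_gt0 : 0 < k * a by rewrite mulr_gt0 //; lra.
have s_gt0 : 0 < Num.sqrt (k * a) by rewrite sqrtr_gt0.
have s_le : Num.sqrt (k * a) <= a * Num.sqrt (2 * k).
  rewrite -ler_sqr ?nnegrE ?sqrtr_ge0 ?mulr_ge0 ?sqrtr_ge0 //; last lra.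
  rewrite exprMn !sqr_sqrtr; [|lra|lra].
  have : 0 <= k * a * (2 * a - 1) by rewrite mulr_ge0 //; lra.
  nra.
rewrite ler_pdivrMr // mulrAC ler_pdivlMr //; lra.
Qed.

Lemma normalized_centerv_indv_le0 i : i \notin A -> u i <= 0.
Proof.
move=> Ai; rewrite /u centerv_indv /indv (negbTE Ai) sub0r mulNr oppr_le0.
by rewrite divr_ge0 ?sqrtr_ge0 ?divr_ge0 ?ler0n.
Qed.

End NormalizedCenteredIndicator.

Lemma symdiff_threshold_gap (R : realDomainType) n (u v : 'I_n -> R)
    (A : {set 'I_n}) (t : R) :
  0 <= t -> (forall i, i \in A -> 2 * t <= u i) ->
  (forall i, i \notin A -> u i <= 0) ->
  forall i, i \in symdiff [set j | t <= v j] A -> t ^+ 2 <= (u i - v i) ^+ 2.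
Proof.
move=> t_ge0 uA unA i; rewrite /symdiff !inE.
case/orP=> /andP[]; first by move=> /unA ui vi; nra.
by rewrite -ltNge => vi /uA ui; nra.
Qed.

Lemma ler_absorb_mul (R : realFieldType) (c k q d : R) :
  0 <= c -> c < 1 -> d <= c * k -> k <= q + d -> d <= c * q / (1 - c).
Proof.
move=> c_ge0 c_lt1 dk kqd.
rewrite ler_pdivlMr; [nra | lra].
Qed.

Theorem lemma6p3 (R : rcfType) (n : nat) (eps : R) (v : 'I_n -> R)
    (Qs : {set 'I_n}) :
  0 <= eps -> eps < 1 / 8 ->
  enorm v = 1 ->
  (1 <= #|Qs|)%N -> (2 * #|Qs| <= n)%N ->
  sqnorm (fun i => centerv (indv Qs) i / enorm (centerv (indv Qs)) - v i)
    <= eps ->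
  let Q := [set i : 'I_n | 1 / (2 * Num.sqrt (2 * (#|Qs|)%:R)) <= v i] in
  (#|symdiff Q Qs|)%:R = sqnorm (R:=R) (fun i => indv Q i - indv Qs i) /\
  (#|symdiff Q Qs|)%:R <= 8 * eps * (#|Q|)%:R / (1 - 8 * eps).
Proof.
move=> eps_ge0 eps_lt _ Qs_gt0 Qs_le_half close Q.
split; first by rewrite sqnorm_indvB.
set k : R := (#|Qs|)%:R; set t := 1 / (2 * Num.sqrt (2 * k)).
have k_ge1 : 1 <= k by rewrite ler1n.
have r_gt0 : 0 < Num.sqrt (2 * k) by rewrite sqrtr_gt0; lra.
have t_ge0 : 0 <= t by rewrite divr_ge0 // mulr_ge0 // ltW.
have two_t : 2 * t = 1 / Num.sqrt (2 * k) by rewrite /t; field; lra.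
have t_sq : t ^+ 2 = 1 / (8 * k).
  by rewrite /t expr_div_n exprMn sqr_sqrtr; [field; lra | lra].
have u_Qs i :
    i \in Qs -> 2 * t <= centerv (indv Qs) i / enorm (centerv (indv Qs)).
  by rewrite two_t; exact: normalized_centerv_indv_ge.
have gap := symdiff_threshold_gap _ _ _ v _ _ t_ge0 u_Qs
  (normalized_centerv_indv_le0 _ _ Qs).
have symdiff_t_sq := le_trans (card_mul_sq_le_sqnorm _ _ _ _ _ gap) close.
apply: (ler_absorb_mul _ _ k); [lra | lra | |].
  by move: symdiff_t_sq; rewrite t_sq mulrA mulr1 ler_pdivrMr; lra.
by rewrite /k -natrD ler_nat card_le_symdiff.
Qed.
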